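(* Under the assumptions stated in the context, the function $x_i^{\mathrm{cv}}$ is locally Lipschitz continuous and directionally differentiable at $\hat{\mathbf{p}}$. Moreover, let $\hat{\boldsymbol{\xi}}$ be an arbitrary optimal solution of the optimization problem $\min_{\boldsymbol{\xi}\in \mathbb{R}^{n_x}} \xi_i$ s.t. $\mathbf{h}(\boldsymbol{\xi},\hat{\mathbf{p}})=\mathbf{0}$, $\mathbf{g}(\boldsymbol{\xi},\hat{\mathbf{p}})\le \mathbf{0}$ (whose optimal value is $x_i^{\mathrm{cv}}(\hat{\mathbf{p}})$). Then, for each direction $\mathbf{d}\in\mathbb{R}^{n_p}$, \begin{equation*} \begin{aligned} [x_i^{\mathrm{cv}}]'(\hat{\mathbf{p}};\mathbf{d})&\equiv\min_{\mathbf{w}\in\mathbb{R}^{n_x}}\quad w_i\\ \text{s.t.}\quad &[\nabla_\mathbf{x}g_k(\hat{\boldsymbol{\xi}},\hat{\mathbf{p}})]^\top\mathbf{w}\le-[\nabla_\mathbf{y}g_k(\hat{\boldsymbol{\xi}},\hat{\mathbf{p}})]^\top\mathbf{d},\quad\forall k\in\{1,...,n_g\}\text{ such that }g_k(\hat{\boldsymbol{\xi}},\hat{\mathbf{p}})=0,\\ &[\nabla_\mathbf{x}h_j(\hat{\boldsymbol{\xi}},\hat{\mathbf{p}})]^\top\mathbf{w}=-[\nabla_\mathbf{y}h_j(\hat{\boldsymbol{\xi}},\hat{\mathbf{p}})]^\top\mathbf{d},\quad\forall j\in\{1,...,l\}. \end{aligned} \end{equation*}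
   Context: Setting: a residual function $\mathbf{f}:\mathbb{R}^{n_x}\times\mathbb{R}^{n_p}\to\mathbb{R}^{n_x}$, a convex compact set $P\subset\mathbb{R}^{n_p}$, and $Q\subset P$ the (nonempty) set of $\mathbf{p}\in P$ for which $\mathbf{f}(\mathbf{z},\mathbf{p})=\mathbf{0}$ has a solution; an implicit function $\mathbf{x}:Q\to\mathbb{R}^{n_x}$ satisfies $\mathbf{f}(\mathbf{x}(\mathbf{p}),\mathbf{p})=\mathbf{0}$ with $\mathbf{x}(\mathbf{p})\in X:=[\mathbf{x}^{\mathrm{L}},\mathbf{x}^{\mathrm{U}}]$ for all $\mathbf{p}\in Q$. Given convex and concave relaxations $\mathbf{f}^{\mathrm{cv}},\mathbf{f}^{\mathrm{cc}}$ of $\mathbf{f}$ on $X\times P$, the implicit function convex relaxation is $x_i^{\mathrm{cv}}(\mathbf{p}):=\inf_{\boldsymbol{\xi}\in X}\xi_i$ s.t. $\mathbf{f}^{\mathrm{cv}}(\boldsymbol{\xi},\mathbf{p})\le\mathbf{0}\le\mathbf{f}^{\mathrm{cc}}(\boldsymbol{\xi},\mathbf{p})$ (with value $+\infty$ if infeasible). Assume $\mathbf{f}\equiv(\tilde{\mathbf{f}},\mathbf{h})$ where $\mathbf{h}:\mathbb{R}^{n_x}\times\mathbb{R}^{n_p}\to\mathbb{R}^{n_h}$ is affine and each $\tilde f_k$ is not affine, and the relaxations of each $\tilde f_k$ are piecewise differentiable: $\tilde f_k^{\mathrm{cv}}=\max_j \tilde f_k^{\mathrm{cv},j}$ with each $\tilde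 f_k^{\mathrm{cv},j}$ continuously differentiable and convex ($j=1,\dots,k_k$), and $\tilde f_k^{\mathrm{cc}}=\min_j \tilde f_k^{\mathrm{cc},j}$ with each $\tilde f_k^{\mathrm{cc},j}$ continuously differentiable and concave ($j=1,\dots,l_k$). Then for $\mathbf{p}\in Q$, $x_i^{\mathrm{cv}}(\mathbf{p})=\min_{\boldsymbol{\xi}\in\mathbb{R}^{n_x}}\xi_i$ s.t. $\mathbf{h}(\boldsymbol{\xi},\mathbf{p})=\mathbf{0}$, $\mathbf{g}(\boldsymbol{\xi},\mathbf{p})\le\mathbf{0}$, where $\mathbf{g}:\mathbb{R}^{n_x}\times\mathbb{R}^{n_p}\to\mathbb{R}^{n_g}$ collects all the inequality constraints $\tilde f_k^{\mathrm{cv},j}(\boldsymbol{\xi},\mathbf{p})\le 0$, $\tilde f_k^{\mathrm{cc},j}(\boldsymbol{\xi},\mathbf{p})\ge 0$ (written as $\le 0$ constraints) together with the box constraint $\boldsymbol{\xi}\in X$. Further assume, at some $\hat{\mathbf{p}}\in\mathrm{int}(Q)$: the (constant) gradients of the components $h_j$ with respect to $\boldsymbol{\xi}$ are linearly independent, and there is a neighborhood $N_{\hat{\mathbf{p}}}\subset Q$ of $\hat{\mathbf{p}}$ such that for each $\mathbf{p}\in N_{\hat{\mathbf{p}}}$ there exists $\boldsymbol{\xi}_\mathbf{p}\in X$ with $\mathbf{h}(\boldsymbol{\xi}_\mathbf{p},\mathbf{p})=\mathbf{0}$ and $\mathbf{g}(\boldsymbol{\xi}_\mathbf{p},\mathbf{p})<\mathbf{0}$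 (strong Slater condition). Here $\nabla_\mathbf{x}$ and $\nabla_\mathbf{y}$ denote partial gradients with respect to the first argument ($\boldsymbol{\xi}$) and second argument ($\mathbf{p}$), respectively, and $[x_i^{\mathrm{cv}}]'(\hat{\mathbf{p}};\mathbf{d})$ is the directional derivative. *)

From mathcomp Require Import all_boot all_order all_algebra.
From mathcomp Require Import all_classical all_reals all_analysis.
Set Implicit Arguments. Unset Strict Implicit. Unset Printing Implicit Defensive.
Import Order.TTheory GRing.Theory Num.Theory.
Import numFieldNormedType.Exports.
Local Open Scope ring_scope.
Local Open Scope classical_set_scope.

Section Defs.
Context {R : realType} {nx np : nat}.

Definition inbox (xL xU z : 'rV[R]_nx) : Prop :=
  forall m : 'I_nx, xL 0 m <= z 0 m <= xU 0 m.

Definition uncurry2 (g : 'rV[R]_nx -> 'rV[R]_np -> R) :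
  'rV[R]_nx * 'rV[R]_np -> R := fun zp => g zp.1 zp.2.

Definition C1 (g : 'rV[R]_nx -> 'rV[R]_np -> R) : Prop :=
  (forall zp, differentiable (uncurry2 g) zp) /\
  (forall v : 'rV[R]_nx * 'rV[R]_np,
      continuous (fun zp => 'D_v (uncurry2 g) zp)).

Definition convex_on2 (xL xU : 'rV[R]_nx) (P : set 'rV[R]_np)
    (g : 'rV[R]_nx -> 'rV[R]_np -> R) : Prop :=
  forall z1 p1 z2 p2 (t : R), inbox xL xU z1 -> P p1 -> inbox xL xU z2 -> P p2 ->
    0 <= t <= 1 ->
    g (t *: z1 + (1 - t) *: z2) (t *: p1 + (1 - t) *: p2)
      <= t * g z1 p1 + (1 - t) * g z2 p2.

Definition concave_on2 (xL xU : 'rV[R]_nx) (P : set 'rV[R]_np)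
    (g : 'rV[R]_nx -> 'rV[R]_np -> R) : Prop :=
  forall z1 p1 z2 p2 (t : R), inbox xL xU z1 -> P p1 -> inbox xL xU z2 -> P p2 ->
    0 <= t <= 1 ->
    t * g z1 p1 + (1 - t) * g z2 p2
      <= g (t *: z1 + (1 - t) *: z2) (t *: p1 + (1 - t) *: p2).

Definition affine2 (g : 'rV[R]_nx -> 'rV[R]_np -> R) : Prop :=
  exists (a : 'cV[R]_nx) (b : 'cV[R]_np) (c : R),
    forall z p, g z p = (z *m a) 0 0 + (p *m b) 0 0 + c.

Definition gradx (g : 'rV[R]_nx -> 'rV[R]_np -> R) (z : 'rV[R]_nx)
    (p : 'rV[R]_np) : 'rV[R]_nx :=
  \row_(m < nx) 'D_(delta_mx 0 m) (fun z' : 'rV[R]_nx => g z' p) z.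

Definition grady (g : 'rV[R]_nx -> 'rV[R]_np -> R) (z : 'rV[R]_nx)
    (p : 'rV[R]_np) : 'rV[R]_np :=
  \row_(m < np) 'D_(delta_mx 0 m) (fun p' : 'rV[R]_np => g z p') p.

End Defs.

Definition dotv {R : realType} {n : nat} (u v : 'rV[R]_n) : R :=
  \sum_(m < n) u 0 m * v 0 m.

(* implicit function convex relaxation
   x_i^cv(p) = inf { xi_i | xi in X, fcv(xi,p) <= 0 <= fcc(xi,p) }  (+oo if empty) *)
Definition xcv {R : realType} {nx np : nat}
    (fcv fcc : 'rV[R]_nx -> 'rV[R]_np -> 'rV[R]_nx) (xL xU : 'rV[R]_nx)
    (i : 'I_nx) (p : 'rV[R]_np) : \bar R :=
  ereal_inf [set (xi 0 i)%:E | xi in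
     [set xi | inbox xL xU xi /\ (forall m, fcv xi p 0 m <= 0)
                              /\ (forall m, 0 <= fcc xi p 0 m)]].

(* the components g_k of g (all written as "<= 0" constraints):
   the pieces fcv^{k,j}, the negated pieces -fcc^{k,j}, and the box constraints
   xL_m - xi_m <= 0, xi_m - xU_m <= 0 *)
Definition gcomp {R : realType} {nx np nf : nat}
    (kc : 'I_nf -> nat) (fcvp : forall k, 'I_(kc k) -> 'rV[R]_nx -> 'rV[R]_np -> R)
    (lc : 'I_nf -> nat) (fccp : forall k, 'I_(lc k) -> 'rV[R]_nx -> 'rV[R]_np -> R)
    (xL xU : 'rV[R]_nx) (c : 'rV[R]_nx -> 'rV[R]_np -> R) : Prop :=
  (exists k (j : 'I_(kc k)), c = fcvp k j) \/
  (exists k (j : 'I_(lc k)), c = (fun z p => - fccp k j z p)) \/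
  (exists m : 'I_nx, c = (fun z p => xL 0 m - z 0 m)) \/
  (exists m : 'I_nx, c = (fun z p => z 0 m - xU 0 m)).

Definition has_dirderiv {R : realType} {np : nat} (F : 'rV[R]_np -> R)
    (p d : 'rV[R]_np) (l : R) : Prop :=
  (fun t : R => (F (p + t *: d) - F p) / t) @ 0^'+ --> l.

(* The relaxed problem has convex inequality constraints [g] and affine
   equality constraints [h], so its feasible set is jointly convex in
   (xi, p) and x_i^cv is a convex function of p.  Near [phat] the strong
   Slater condition makes it finite and the box X bounds it, so it is
   Lipschitz there; its one-sided difference quotients are then monotone and
   bounded, hence convergent.
   For the formula, the gradient inequality at [xihat] shows that
   (xi_t - xihat) / t satisfies the linearized constraints whenever xi_t is
   feasible at [phat + t d]; this bounds the difference quotients from below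
   by the value of the linear program.  Conversely, a linearized-feasible [w]
   tilted slightly towards a Slater point makes every active constraint
   strictly decrease along the ray, which gives the upper bound.  The linear
   program attains its value because it has finitely many constraints and is
   bounded below by the Lipschitz estimate. *)

From mathcomp Require Import all_boot all_order all_algebra.
From mathcomp Require Import all_classical all_reals all_analysis.
From mathcomp Require Import ring lra.
Import Order.TTheory GRing.Theory Num.Theory.
Import numFieldNormedType.Exports.
Local Open Scope ring_scope.
Local Open Scope classical_set_scope.

Set Implicit Arguments. Unset Strict Implicit.

Section DotProduct.
Variables (R : realType) (n : nat).
Implicit Types u v w : 'rV[R]_n.

Lemma dotvC u v : dotv u v = dotv v u.
Proof. by apply: eq_bigr => m _; rewrite mulrC. Qed.

Lemma dotvDr u v w : dotv u (v + w) = dotv u v + dotv u w.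
Proof. by rewrite /dotv -big_split; apply: eq_bigr => m _; rewrite mxE mulrDr. Qed.

Lemma dotvZr u v (s : R) : dotv u (s *: v) = s * dotv u v.
Proof. by rewrite /dotv mulr_sumr; apply: eq_bigr => m _; rewrite mxE mulrCA. Qed.

Lemma dotvBr u v w : dotv u (v - w) = dotv u v - dotv u w.
Proof. by rewrite dotvDr -scaleN1r dotvZr mulN1r. Qed.

Lemma dotv0r u : dotv u 0 = 0.
Proof. by rewrite -(scale0r 0) dotvZr mul0r. Qed.

Lemma dotv0l u : dotv 0 u = 0.
Proof. by rewrite dotvC dotv0r. Qed.

Lemma dotv_delta (m : 'I_n) u : dotv (delta_mx 0 m) u = u 0 m.
Proof.
rewrite /dotv (bigD1 m) //= big1 ?addr0; first by rewrite mxE !eqxx mul1r.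
by move=> k km; rewrite mxE (negPf km) andbF mul0r.
Qed.

Lemma mulmx_dotv u (a : 'cV[R]_n) : (u *m a) 0 0 = dotv a^T u.
Proof. by rewrite mxE dotvC; apply: eq_bigr => m _; rewrite mxE. Qed.

End DotProduct.

Section PolyhedronFace.
Variables (R : realType) (n : nat) (I : finType).
Variables (a : I -> 'rV[R]_n) (b : I -> R) (c : 'rV[R]_n).

Definition polyface (E : {set I}) : set 'rV[R]_n :=
  [set w | (forall j, dotv (a j) w <= b j) /\
           (forall j, j \in E -> dotv (a j) w = b j)].

Lemma polyfaceS (E E' : {set I}) : E \subset E' -> polyface E' `<=` polyface E.
Proof. by move=> /fintype.subsetP sEE' w [le eq]; split=> // j /sEE'; apply: eq. Qed.

Lemma polyface_shift (E : {set I}) w u (s : R) : polyface E w ->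
  (forall j, j \in E -> dotv (a j) u = 0) -> 0 <= s ->
  (forall j, j \notin E -> 0 < dotv (a j) u -> s * dotv (a j) u <= b j - dotv (a j) w) ->
  polyface E (w + s *: u).
Proof.
move=> [wle weq] uE s0 step; split=> j; rewrite dotvDr dotvZr; last first.
  by move=> jE; rewrite uE // mulr0 addr0 weq.
have [jE|njE] := boolP (j \in E); first by rewrite uE // mulr0 addr0 wle.
have [uj|uj] := ltP 0 (dotv (a j) u); first by rewrite -lerBrDl step.
by apply: le_trans (wle j); rewrite gerDl mulr_ge0_le0.
Qed.

(* Moving along a descent direction [u] parallel to the face, one either
   hits a new constraint or decreases [c] without bound. *)
Lemma polyface_exit (E : {set I}) w u (M : R) : polyface E w ->
  (forall j, j \in E -> dotv (a j) u = 0) -> dotv c u < 0 ->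
  (forall y, polyface E y -> M <= dotv c y) ->
  exists j, j \notin E /\ exists2 y, polyface (j |: E) y & dotv c y <= dotv c w.
Proof.
move=> Fw uE cu hM.
have [[j0 [nj0 pos0]]|none] :=
  pselect (exists j, j \notin E /\ 0 < dotv (a j) u); last first.
  exfalso; set s := (dotv c w - M + 1) / - dotv c u.
  have s0 : 0 <= s.
    by apply: divr_ge0; [have := hM w Fw; lra | rewrite oppr_ge0 ltW].
  have Fws : polyface E (w + s *: u).
    by apply: polyface_shift => // j nj pj; exfalso; apply: none; exists j.
  have := hM _ Fws; rewrite dotvDr dotvZr.
  have -> : s * dotv c u = - (dotv c w - M + 1) by rewrite /s; field; rewrite lt_eqF.
  lra.
pose ratio j := (b j - dotv (a j) w) / dotv (a j) u.
have Pj0 : (j0 \notin E) && (0 < dotv (a j0) u) by rewrite nj0 pos0.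
have [js /andP [njs pjs] jsmin] :=
  arg_minP (P := [pred j | (j \notin E) && (0 < dotv (a j) u)]) ratio Pj0.
have s0 : 0 <= ratio js by rewrite divr_ge0 ?subr_ge0 ?Fw.1 ?ltW.
exists js; split => //; exists (w + ratio js *: u); last first.
  by rewrite dotvDr dotvZr gerDl mulr_ge0_le0 // ltW.
have Fws : polyface E (w + ratio js *: u).
  apply: polyface_shift => // j nj pj.
  by rewrite -ler_pdivlMr // jsmin //= nj pj.
split=> [|j]; first exact: Fws.1.
rewrite in_setU1 => /orP [/eqP ->|jE]; last exact: Fws.2.
by rewrite dotvDr dotvZr /ratio mulfVK ?gt_eqF // addrC subrK.
Qed.

(* Induction on the number of constraints not forced tight: unless [c] is
   constant on the face, a descent direction pushes every point of the face
   onto a smaller face without increasing [c]. *)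
Lemma polyface_attain (E : {set I}) (M : R) : polyface E !=set0 ->
  (forall w, polyface E w -> M <= dotv c w) ->
  exists2 w, polyface E w & forall w', polyface E w' -> dotv c w <= dotv c w'.
Proof.
have [k] := ubnP #|~: E|; elim: k E => // k IH E hk [w0 Fw0] hM.
have [[w1 [w2 [Fw1 [Fw2 lt21]]]]|const] := pselect (exists w1 w2,
    polyface E w1 /\ polyface E w2 /\ dotv c w2 < dotv c w1); last first.
  exists w0 => // w Fw; rewrite leNgt; apply/negP => lt.
  by apply: const; exists w0, w.
have exit : forall w, polyface E w -> exists j, j \notin E /\
    exists2 y, polyface (j |: E) y & dotv c y <= dotv c w.
  move=> w Fw; apply: (polyface_exit (u := w2 - w1) Fw _ _ hM).
    by move=> j jE; rewrite dotvBr Fw1.2 // Fw2.2 // subrr.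
  by rewrite dotvBr subr_lt0.
pose J j := j \notin E /\ polyface (j |: E) !=set0.
have [zf hzf] : exists zf : I -> 'rV[R]_n, forall j, J j ->
    polyface (j |: E) (zf j) /\
    forall w, polyface (j |: E) w -> dotv c (zf j) <= dotv c w.
  have [|zf hzf] := @choice I 'rV[R]_n (fun j z => J j -> polyface (j |: E) z /\
    forall w, polyface (j |: E) w -> dotv c z <= dotv c w); last by exists zf.
  move=> j; have [[nj ne]|nJ] := pselect (J j); last by exists 0.
  have ltk : (#|~: (j |: E)| < k)%N.
    apply: (@leq_trans #|~: E|); last by rewrite -ltnS.
    apply: proper_card; apply/properP.
    by split; [rewrite finset.setCS finset.subsetUr | exists j; rewrite !inE ?eqxx].
  have [z Fz zmin] := IH _ ltk ne (fun w Fw => hM w (polyfaceS (finset.subsetUr _ _) Fw)).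
  by exists z.
have [j0 [nj0 [y0 Fy0 _]]] := exit w0 Fw0.
have Jj0 : `[< J j0 >] by apply/asboolP; split=> //; exists y0.
have [j1 /asboolP Jj1 j1min] :=
  arg_minP (P := [pred j | `[< J j >]]) (fun j => dotv c (zf j)) Jj0.
exists (zf j1); first by apply: polyfaceS (hzf j1 Jj1).1; rewrite finset.subsetUr.
move=> w Fw; have [j [nj [y Fy cy]]] := exit w Fw.
have Jj : J j by split=> //; exists y.
apply: le_trans (j1min j (asboolT Jj)) _.
by apply: le_trans cy; apply: (hzf j Jj).2.
Qed.

End PolyhedronFace.

Section ConvexFunction.
Variables (R : realType) (n : nat).
Implicit Types (F : 'rV[R]_n -> R) (ph p q d : 'rV[R]_n).

Definition convex_on (B : set 'rV[R]_n) F :=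
  forall p q (t : R), B p -> B q -> 0 <= t <= 1 ->
    F (t *: p + (1 - t) *: q) <= t * F p + (1 - t) * F q.

Lemma convex_onS (A B : set 'rV[R]_n) F : A `<=` B -> convex_on B F -> convex_on A F.
Proof. by move=> AB cvx p q t /AB Bp /AB Bq; apply: cvx. Qed.

(* [q] is a convex combination of [p] and of the point at distance [r]
   beyond [q] on the ray from [p], which still lies in the larger ball. *)
Lemma convex_bounded_diff_le F ph (r a b : R) : 0 < r ->
  convex_on [set p | `|p - ph| < 2 * r] F ->
  (forall p, `|p - ph| < 2 * r -> a <= F p <= b) ->
  forall p q, `|p - ph| < r -> `|q - ph| < r ->
    F q - F p <= (b - a) / r * `|q - p|.
Proof.
move=> r0 cvx bnd p q hp hq.
have hp2 : `|p - ph| < 2 * r by apply: lt_le_trans hp _; lra.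
have ba : 0 <= b - a by have := bnd p hp2; lra.
have [->|qp] := eqVneq q p; first by rewrite !subrr normr0 mulr0.
set dl := `|q - p|.
have dl0 : 0 < dl by rewrite /dl normr_gt0 subr_eq0.
set y := q + (r / dl) *: (q - p).
have hy : `|y - ph| < 2 * r.
  rewrite /y addrAC; apply: le_lt_trans (ler_normD _ _) _.
  by rewrite normrZ ger0_norm ?divr_ge0 ?ltW // -/dl mulfVK ?gt_eqF //; lra.
set lam := dl / (dl + r).
have lam01 : 0 <= lam <= 1.
  apply/andP; split; first by rewrite divr_ge0 // ltW // addr_gt0.
  by rewrite ler_pdivrMr ?addr_gt0 // mul1r lerDl ltW.
have yp_q : lam *: y + (1 - lam) *: p = q.
  have e : lam * (r / dl) = 1 - lam.
    by rewrite /lam; field; rewrite !gt_eqF ?addr_gt0.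
  by rewrite /y scalerDr scalerA e -addrA -scalerDr subrK -scalerDl subrKC scale1r.
have := cvx y p lam hy hp2 lam01; rewrite yp_q => hc.
have := bnd y hy; have := bnd p hp2; case/andP: lam01 => lam0 _ hbp hby.
have : F q - F p <= lam * (b - a) by nra.
move/le_trans; apply.
rewrite mulrC -mulrA ler_wpM2l // /lam ler_pdivrMr ?addr_gt0 //.
have -> : r^-1 * dl * (dl + r) = dl + dl * dl / r by field; rewrite gt_eqF.
by rewrite lerDl divr_ge0 ?mulr_ge0 // ltW.
Qed.

Lemma convex_bounded_lipschitz F ph (r a b : R) : 0 < r ->
  convex_on [set p | `|p - ph| < 2 * r] F ->
  (forall p, `|p - ph| < 2 * r -> a <= F p <= b) ->
  forall p q, `|p - ph| < r -> `|q - ph| < r ->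
    `|F p - F q| <= (b - a) / r * `|p - q|.
Proof.
move=> r0 cvx bnd p q hp hq; rewrite ler_norml; apply/andP; split.
  by rewrite lerNl opprB distrC; exact (convex_bounded_diff_le r0 cvx bnd hp hq).
exact (convex_bounded_diff_le r0 cvx bnd hq hp).
Qed.

Lemma ray_in_ball ph d (rho t : R) : 0 < rho -> 0 <= t ->
  t < rho / (`|d| + 1) -> `|ph + t *: d - ph| < rho.
Proof.
move=> rho0 t0 tt; rewrite addrAC subrr add0r normrZ ger0_norm //.
apply: le_lt_trans (_ : rho / (`|d| + 1) * `|d| < rho).
  by apply: ler_wpM2r => //; exact: ltW.
by rewrite mulrAC ltr_pdivrMr ?ltr_wpDl // ltr_pM2l // ltrDl.
Qed.

Lemma convex_quotient_mono F ph d (rho s t : R) :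
  convex_on [set p | `|p - ph| < rho] F -> `|ph + t *: d - ph| < rho ->
  0 < s -> s <= t ->
  (F (ph + s *: d) - F ph) / s <= (F (ph + t *: d) - F ph) / t.
Proof.
move=> cvx ht s0 st; have t0 : 0 < t by apply: lt_le_trans st.
have hph : `|ph - ph| < rho by apply: le_lt_trans ht; rewrite subrr normr0.
have st01 : 0 <= s / t <= 1.
  by apply/andP; split; [rewrite divr_ge0 // ltW | rewrite ler_pdivrMr // mul1r].
have := cvx _ _ _ ht hph st01.
have -> : s / t *: (ph + t *: d) + (1 - s / t) *: ph = ph + s *: d.
  by rewrite scalerDr scalerA mulfVK ?gt_eqF // addrAC -scalerDl subrKC scale1r.
move=> /(ler_wpM2l (ltW t0)).
have -> : t * (s / t * F (ph + t *: d) + (1 - s / t) * F ph) =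
    s * F (ph + t *: d) + (t - s) * F ph by field; rewrite gt_eqF.
by rewrite ler_pdivrMr // mulrAC ler_pdivlMr //; nra.
Qed.

(* The Lipschitz bound bounds the nondecreasing difference quotients below. *)
Lemma convex_lipschitz_dirderiv F ph (rho L : R) : 0 < rho ->
  convex_on [set p | `|p - ph| < rho] F ->
  (forall p q, `|p - ph| < rho -> `|q - ph| < rho ->
     `|F p - F q| <= L * `|p - q|) ->
  forall d, exists l, has_dirderiv F ph d l.
Proof.
move=> rho0 cvx lip d; set tau := rho / (`|d| + 1).
have tau0 : 0 < tau by rewrite divr_gt0 // ltr_wpDl.
set q := fun t => (F (ph + t *: d) - F ph) / t.
have hph : `|ph - ph| < rho by rewrite subrr normr0.
have in_tau t : t \in Interval (BRight 0) (BLeft tau) -> 0 < t /\ `|ph + t *: d - ph| < rho.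
  by rewrite in_itv => /andP [t0 tt]; split=> //; apply: ray_in_ball; rewrite ?ltW.
exists (inf (q @` [set` Interval (BRight 0) (BLeft tau)])); apply: nondecreasing_at_right_cvgr.
- by rewrite bnd_simp.
- move=> s t /in_tau [s0 _] /in_tau [_ ht] st.
  exact: convex_quotient_mono cvx ht s0 st.
exists (- (L * `|d|)) => _ [t /in_tau [t0 ht] <-].
have := lip _ _ ht hph; rewrite addrAC subrr add0r normrZ (ger0_norm (ltW t0)).
rewrite ler_norml => /andP [hl _].
by rewrite /q ler_pdivlMr //; lra.
Qed.

End ConvexFunction.

Lemma eventually_le0 (R : realType) (phi : R -> R) (c L : R) :
  (fun s => (phi s - c) / s) @ 0^'+ --> L -> c <= 0 -> (c = 0 -> L < 0) ->
  \forall t \near 0^'+, phi t <= 0.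
Proof.
move=> dphi c_le0 Lneg; have [c0|c0] := eqVneq c 0.
  near=> t; have t0 : 0 < t by near: t; exact: nbhs_right_gt.
  have : (phi t - c) / t < 0 by near: t; exact: (cvgr_lt _ dphi 0 (Lneg c0)).
  by rewrite c0 subr0 ltr_pdivrMr // mul0r => /ltW.
have c_lt0 : c < 0 by rewrite lt_neqAle c0.
have L1 : L < `|L| + 1 by apply: le_lt_trans (ler_norm L) _; rewrite ltrDl.
have tmax : 0 < - c / (`|L| + 1) by rewrite divr_gt0 ?oppr_gt0 // ltr_wpDl.
near=> t; have t0 : 0 < t by near: t; exact: nbhs_right_gt.
have tt : t < - c / (`|L| + 1) by near: t; exact: nbhs_right_lt.
have : (phi t - c) / t < `|L| + 1 by near: t; exact: (cvgr_lt _ dphi _ L1).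
move: tt; rewrite ltr_pdivrMr // ltr_pdivlMr ?ltr_wpDl // => h1 h2.
by apply: ltW; lra.
Unshelve. all: by end_near.
Qed.

Section PartialGradients.
Variables (R : realType) (nx np : nat).
Implicit Types (g : 'rV[R]_nx -> 'rV[R]_np -> R) (z u : 'rV[R]_nx) (p d : 'rV[R]_np).

Lemma gradxE g z p m :
  gradx g z p 0 m = 'D_((delta_mx 0 m, 0) : 'rV[R]_nx * 'rV[R]_np) (uncurry2 g) (z, p).
Proof.
rewrite mxE /derive; congr lim; apply: (congr1 (fun f : R -> R => f @ 0^')).
by apply/funext => s; rewrite /uncurry2 /= scaler0 add0r.
Qed.

Lemma gradyE g z p m :
  grady g z p 0 m = 'D_((0, delta_mx 0 m) : 'rV[R]_nx * 'rV[R]_np) (uncurry2 g) (z, p).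
Proof.
rewrite mxE /derive; congr lim; apply: (congr1 (fun f : R -> R => f @ 0^')).
by apply/funext => s; rewrite /uncurry2 /= scaler0 add0r.
Qed.

Lemma pairl_sum_delta u : ((u, 0) : 'rV[R]_nx * 'rV[R]_np) =
  \sum_(m < nx) u 0 m *: ((delta_mx 0 m, 0) : 'rV[R]_nx * 'rV[R]_np).
Proof.
rewrite {1}(row_sum_delta u).
apply: (big_rec2 (fun a b => (a, 0) = b)) => // m y1 y2 _ <-.
by rewrite [RHS]/GRing.add /= /add_pair /= scaler0 addr0.
Qed.

Lemma pairr_sum_delta d : ((0, d) : 'rV[R]_nx * 'rV[R]_np) =
  \sum_(m < np) d 0 m *: ((0, delta_mx 0 m) : 'rV[R]_nx * 'rV[R]_np).
Proof.
rewrite {1}(row_sum_delta d).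
apply: (big_rec2 (fun a b => (0, a) = b)) => // m y1 y2 _ <-.
by rewrite [RHS]/GRing.add /= /add_pair /= scaler0 addr0.
Qed.

Lemma dotv_gradx g z p u : differentiable (uncurry2 g) (z, p) ->
  dotv (gradx g z p) u = 'd (uncurry2 g) (z, p) ((u, 0) : 'rV[R]_nx * 'rV[R]_np).
Proof.
move=> dg; rewrite pairl_sum_delta linear_sum /dotv; apply: eq_bigr => m _.
by rewrite linearZ /= -deriveE // -gradxE mulrC.
Qed.

Lemma dotv_grady g z p d : differentiable (uncurry2 g) (z, p) ->
  dotv (grady g z p) d = 'd (uncurry2 g) (z, p) ((0, d) : 'rV[R]_nx * 'rV[R]_np).
Proof.
move=> dg; rewrite pairr_sum_delta linear_sum /dotv; apply: eq_bigr => m _.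
by rewrite linearZ /= -deriveE // -gradyE mulrC.
Qed.

Definition grad_expansion g z p := forall u d,
  (fun s => (g (z + s *: u) (p + s *: d) - g z p) / s) @ 0^'+ -->
    dotv (gradx g z p) u + dotv (grady g z p) d.

Lemma differentiable_grad_expansion g z p :
  differentiable (uncurry2 g) (z, p) -> grad_expansion g z p.
Proof.
move=> dg u d; apply: cvg_dnbhs_at_right.
have -> : (fun s => (g (z + s *: u) (p + s *: d) - g z p) / s) =
    (fun s => s^-1 *: ((uncurry2 g \o shift (z, p)) (s *: ((u, d) : 'rV[R]_nx * 'rV[R]_np))
       - uncurry2 g (z, p))).
  by apply/funext => s; rewrite /= /uncurry2 /= [z + _]addrC [p + _]addrC mulrC.
have -> : ((u, d) : 'rV[R]_nx * 'rV[R]_np) = (u, 0) + (0, d).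
  by rewrite [RHS]/GRing.add /= /add_pair /= addr0 add0r.
rewrite dotv_gradx // dotv_grady // -linearD -deriveE //.
exact: diff_derivable.
Qed.

Lemma derive_affine_line n (f : 'rV[R]_n -> R) a v (l : R) :
  (forall s, f (a + s *: v) = f a + s * l) -> 'D_v f a = l.
Proof.
move=> hf; apply: cvg_lim; first exact: Rhausdorff.
apply: cvg_near_cst; near=> s; have s0 : s != 0 by near: s; exact: nbhs_dnbhs_neq.
rewrite /= [s *: v + a]addrC hf addrAC subrr add0r.
by rewrite /GRing.scale /= mulrA mulVf // mul1r.
Unshelve. all: by end_near.
Qed.

Lemma affine2_expand g : affine2 g -> forall z p u d,
  g (z + u) (p + d) = g z p + dotv (gradx g z p) u + dotv (grady g z p) d.
Proof.
move=> [a [b [c hg]]] z p u d.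
have gx : gradx g z p = a^T.
  apply/rowP => m; rewrite !mxE; apply: derive_affine_line => s.
  by rewrite !hg !mulmx_dotv dotvDr dotvZr [dotv a^T (delta_mx _ _)]dotvC dotv_delta mxE; ring.
have gy : grady g z p = b^T.
  apply/rowP => m; rewrite !mxE; apply: derive_affine_line => s.
  by rewrite !hg !mulmx_dotv dotvDr dotvZr [dotv b^T (delta_mx _ _)]dotvC dotv_delta mxE; ring.
by rewrite gx gy !hg !mulmx_dotv !dotvDr; ring.
Qed.

Lemma affine2_expand_at g z0 p0 z p : affine2 g ->
  g z p = g z0 p0 + dotv (gradx g z0 p0) (z - z0) + dotv (grady g z0 p0) (p - p0).
Proof. by move=> ag; rewrite -affine2_expand // !subrKC. Qed.

Lemma affine2_grad_expansion g z p : affine2 g -> grad_expansion g z p.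
Proof.
move=> ag u d; apply: cvg_near_cst; near=> s.
have s0 : 0 < s by near: s; exact: nbhs_right_gt.
by rewrite affine2_expand // !dotvZr; field; rewrite gt_eqF.
Unshelve. all: by end_near.
Qed.

Lemma affine2_conv g z1 z2 p1 p2 (t : R) : affine2 g ->
  g (t *: z1 + (1 - t) *: z2) (t *: p1 + (1 - t) *: p2) =
  t * g z1 p1 + (1 - t) * g z2 p2.
Proof. by move=> [a [b [c hg]]]; rewrite !hg !mulmx_dotv !dotvDr !dotvZr; ring. Qed.

Section OnBox.
Variables (xL xU : 'rV[R]_nx) (P : set 'rV[R]_np).

Lemma affine2_convex g : affine2 g -> convex_on2 xL xU P g.
Proof. by move=> ag z1 p1 z2 p2 t _ _ _ _ _; rewrite affine2_conv. Qed.

Lemma concave_on2N g : concave_on2 xL xU P g -> convex_on2 xL xU P (fun z p => - g z p).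
Proof. by move=> cg z1 p1 z2 p2 t b1 P1 b2 P2 t01; have := cg _ _ _ _ _ b1 P1 b2 P2 t01; lra. Qed.

Lemma convex_on2_grad_ineq g z0 p0 z p :
  convex_on2 xL xU P g -> grad_expansion g z0 p0 ->
  inbox xL xU z0 -> P p0 -> inbox xL xU z -> P p ->
  g z0 p0 + dotv (gradx g z0 p0) (z - z0) + dotv (grady g z0 p0) (p - p0) <= g z p.
Proof.
move=> cg eg bz0 Pp0 bz Pp.
rewrite -addrA -lerBrDl; apply: (cvgr_to_le (eg (z - z0) (p - p0))).
near=> s.
have s0 : 0 < s by near: s; exact: nbhs_right_gt.
have s1 : s <= 1 by near: s; apply: nbhs_right_ltW; exact: ltr01.
have segment (T : lmodType R) (x0 x : T) : x0 + s *: (x - x0) = s *: x + (1 - s) *: x0.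
  by rewrite scalerBr scalerBl scale1r addrCA addrC.
rewrite !segment ler_pdivrMr //.
have := cg z p z0 p0 s bz Pp bz0 Pp0; rewrite ltW //= s1 => /(_ isT); lra.
Unshelve. all: by end_near.
Qed.

End OnBox.

End PartialGradients.

Section RelaxedProblem.
Variables (R : realType) (nf nh np : nat).
Local Notation nx := (nf + nh)%N.
Variables (fcv fcc : 'rV[R]_nx -> 'rV[R]_np -> 'rV[R]_nx) (P : set 'rV[R]_np)
  (xL xU : 'rV[R]_nx) (kc : 'I_nf -> nat)
  (fcvp : forall k, 'I_(kc k) -> 'rV[R]_nx -> 'rV[R]_np -> R)
  (lc : 'I_nf -> nat) (fccp : forall k, 'I_(lc k) -> 'rV[R]_nx -> 'rV[R]_np -> R)
  (i : 'I_nx) (h : 'I_nh -> 'rV[R]_nx -> 'rV[R]_np -> R).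
Arguments fcvp : clear implicits.
Arguments fccp : clear implicits.

Definition gidx :=
  (({k : 'I_nf & 'I_(kc k)} + {k : 'I_nf & 'I_(lc k)}) + ('I_nx + 'I_nx))%type.

Definition gcon (j : gidx) : 'rV[R]_nx -> 'rV[R]_np -> R :=
  match j with
  | inl (inl s) => fcvp (tag s) (tagged s)
  | inl (inr s) => fun z p => - fccp (tag s) (tagged s) z p
  | inr (inl m) => fun z p => xL 0 m - z 0 m
  | inr (inr m) => fun z p => z 0 m - xU 0 m
  end.

Lemma gcompP c : gcomp fcvp fccp xL xU c <-> exists j, c = gcon j.
Proof.
split.
  case=> [[k [j ->]]|[[k [j ->]]|[[m ->]|[m ->]]]].
  - by exists (inl (inl (Tagged (fun k => 'I_(kc k)) j))).
  - by exists (inl (inr (Tagged (fun k => 'I_(lc k)) j))).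
  - by exists (inr (inl m)).
  - by exists (inr (inr m)).
case=> [[[[k j]|[k j]]|[m|m]] ->] /=.
- by left; exists k, j.
- by right; left; exists k, j.
- by right; right; left; exists m.
- by right; right; right; exists m.
Qed.

Lemma gcomp_allP (Pr : ('rV[R]_nx -> 'rV[R]_np -> R) -> Prop) :
  (forall c, gcomp fcvp fccp xL xU c -> Pr c) <-> (forall j, Pr (gcon j)).
Proof.
split=> [H j|H c /gcompP [j ->]]; last exact: H.
by apply: H; apply/gcompP; exists j.
Qed.

Definition feasible p z := (forall j, h j z p = 0) /\ (forall j, gcon j z p <= 0).

Definition slater_point p z := (forall j, h j z p = 0) /\ (forall j, gcon j z p < 0).

Lemma slater_point_feasible p z : slater_point p z -> feasible p z.
Proof. by case=> hz gz; split=> // j; exact: ltW. Qed.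

Lemma feasible_box p z : feasible p z -> inbox xL xU z.
Proof.
move=> [_ gz] m; apply/andP; split.
  by have := gz (inr (inl m)); rewrite /= subr_le0.
by have := gz (inr (inr m)); rewrite /= subr_le0.
Qed.

Hypothesis relax_h : forall z p j,
  fcv z p 0 (rshift nf j) = h j z p /\ fcc z p 0 (rshift nf j) = h j z p.
Hypothesis fcv_max : forall k z p,
  (forall j, fcvp k j z p <= fcv z p 0 (lshift nh k)) /\
  exists j, fcvp k j z p = fcv z p 0 (lshift nh k).
Hypothesis fcc_min : forall k z p,
  (forall j, fcc z p 0 (lshift nh k) <= fccp k j z p) /\
  exists j, fccp k j z p = fcc z p 0 (lshift nh k).

Lemma relaxed_feasibleE p :
  [set xi | inbox xL xU xi /\ (forall m, fcv xi p 0 m <= 0)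
                           /\ (forall m, 0 <= fcc xi p 0 m)] = feasible p.
Proof.
apply/seteqP; split => z /=.
  move=> [bz [cvz ccz]]; split.
    move=> j; have [<- e2] := relax_h z p j.
    by apply/eqP; rewrite eq_le cvz /= -e2 ccz.
  case=> [[[k j]|[k j]]|[m|m]] /=.
  - exact: le_trans ((fcv_max k z p).1 j) (cvz _).
  - by rewrite oppr_le0; apply: le_trans (ccz _) ((fcc_min k z p).1 j).
  - by rewrite subr_le0; case/andP: (bz m).
  - by rewrite subr_le0; case/andP: (bz m).
move=> fz; split; first exact: feasible_box fz.
have [hz gz] := fz.
split=> m; rewrite -(splitK m); case: (fintype.split m) => [k|j] /=.
- have [j <-] := (fcv_max k z p).2.
  exact: (gz (inl (inl (Tagged (fun k => 'I_(kc k)) j)))).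
- by rewrite (relax_h z p j).1 hz.
- have [j <-] := (fcc_min k z p).2.
  by have := gz (inl (inr (Tagged (fun k => 'I_(lc k)) j))); rewrite /= oppr_le0.
- by rewrite (relax_h z p j).2 hz.
Qed.

(* [fine] maps the value +oo of an infeasible [p] to 0; [xcvR] is only used
   at feasible parameters. *)
Definition xcvR p := fine (xcv fcv fcc xL xU i p).

Lemma xcvE p : xcv fcv fcc xL xU i p = ereal_inf [set (z 0 i)%:E | z in feasible p].
Proof. by rewrite /xcv relaxed_feasibleE. Qed.

Lemma feasible_xcvR p z : feasible p z ->
  [/\ xcv fcv fcc xL xU i p = (xcvR p)%:E, xcvR p <= z 0 i & xL 0 i <= xcvR p].
Proof.
move=> fz.
have lb : ((xL 0 i)%:E <= xcv fcv fcc xL xU i p)%E.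
  rewrite xcvE; apply: le_ereal_inf_tmp => _ [y fy <-].
  by rewrite lee_fin; case/andP: (feasible_box fy i).
have ub : (xcv fcv fcc xL xU i p <= (z 0 i)%:E)%E.
  by rewrite xcvE; apply: ereal_inf_lbound; exists z.
have e : xcv fcv fcc xL xU i p = (xcvR p)%:E.
  rewrite /xcvR fineK // fin_numE; apply/andP.
  by split; apply/eqP => e; [move: lb | move: ub]; rewrite e.
by split => //; [move: ub | move: lb]; rewrite e lee_fin.
Qed.

Lemma xcvR_adherent p e : 0 < e -> (exists z, feasible p z) ->
  exists2 z, feasible p z & z 0 i < xcvR p + e.
Proof.
move=> e0 [z fz]; have [xcvRE _ _] := feasible_xcvR fz.
have : (xcv fcv fcc xL xU i p < (xcvR p + e)%:E)%E by rewrite xcvRE lte_fin ltrDl.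
by rewrite xcvE => /ereal_inf_lt [_ [y fy <-]]; rewrite lte_fin; exists y.
Qed.

Lemma xcvR_glb p (M : R) : (exists z, feasible p z) ->
  (forall z, feasible p z -> M <= z 0 i) -> M <= xcvR p.
Proof.
move=> nep hM; apply/ler_addgt0Pr => e e0.
have [z fz lt] := xcvR_adherent e0 nep.
exact/ltW/(le_lt_trans (hM z fz)).
Qed.

Hypothesis fcvp_C1_convex : forall k j, C1 (fcvp k j) /\ convex_on2 xL xU P (fcvp k j).
Hypothesis fccp_C1_concave : forall k j, C1 (fccp k j) /\ concave_on2 xL xU P (fccp k j).
Hypothesis h_affine : forall j, affine2 (h j).

Lemma affine2_box_lower m :
  affine2 (fun (z : 'rV[R]_nx) (_ : 'rV[R]_np) => xL 0 m - z 0 m).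
Proof.
exists (- delta_mx m 0), 0, (xL 0 m) => z p.
by rewrite mulmxN mulmx0 -colE !mxE; ring.
Qed.

Lemma affine2_box_upper m :
  affine2 (fun (z : 'rV[R]_nx) (_ : 'rV[R]_np) => z 0 m - xU 0 m).
Proof.
exists (delta_mx m 0), 0, (- xU 0 m) => z p.
by rewrite mulmx0 -colE !mxE; ring.
Qed.

Lemma gcon_convex j : convex_on2 xL xU P (gcon j).
Proof.
case: j => [[[k j]|[k j]]|[m|m]] /=.
- exact: (fcvp_C1_convex j).2.
- exact/concave_on2N/(fccp_C1_concave j).2.
- exact/affine2_convex/affine2_box_lower.
- exact/affine2_convex/affine2_box_upper.
Qed.

Lemma gcon_grad_expansion j z p : grad_expansion (gcon j) z p.
Proof.
case: j => [[[k j]|[k j]]|[m|m]] /=.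
- by apply: differentiable_grad_expansion; exact: (fcvp_C1_convex j).1.1.
- apply: differentiable_grad_expansion.
  have -> : uncurry2 (fun z p => - fccp k j z p) = - uncurry2 (fccp k j) by [].
  exact/differentiableN/(fccp_C1_concave j).1.1.
- exact/affine2_grad_expansion/affine2_box_lower.
- exact/affine2_grad_expansion/affine2_box_upper.
Qed.

Lemma gcon_grad_ineq j z0 p0 z p :
  inbox xL xU z0 -> P p0 -> inbox xL xU z -> P p ->
  gcon j z0 p0 + dotv (gradx (gcon j) z0 p0) (z - z0) +
    dotv (grady (gcon j) z0 p0) (p - p0) <= gcon j z p.
Proof. by apply: convex_on2_grad_ineq; [exact: gcon_convex | exact: gcon_grad_expansion]. Qed.

Lemma feasible_conv p1 p2 z1 z2 (t : R) : P p1 -> P p2 ->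
  feasible p1 z1 -> feasible p2 z2 -> 0 <= t <= 1 ->
  feasible (t *: p1 + (1 - t) *: p2) (t *: z1 + (1 - t) *: z2).
Proof.
move=> P1 P2 f1 f2 t01; split=> j.
  by rewrite affine2_conv // f1.1 f2.1 !mulr0 addr0.
have := @gcon_convex j z1 p1 z2 p2 t (feasible_box f1) P1 (feasible_box f2) P2 t01.
have := f1.2 j; have := f2.2 j; case/andP: t01 => t0 t1; nra.
Qed.

Lemma xcvR_convex (B : set 'rV[R]_np) : B `<=` P ->
  (forall p, B p -> exists z, feasible p z) -> convex_on B xcvR.
Proof.
move=> BP neB p q t Bp Bq t01; apply/ler_addgt0Pr => e e0.
have [z1 f1 lt1] := xcvR_adherent e0 (neB p Bp).
have [z2 f2 lt2] := xcvR_adherent e0 (neB q Bq).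
have [_ le _] := feasible_xcvR (feasible_conv (BP _ Bp) (BP _ Bq) f1 f2 t01).
apply: (le_trans le); rewrite !mxE; case/andP: t01 => t0 t1; nra.
Qed.

Variable phat : 'rV[R]_np.
Hypothesis slater : exists N, nbhs phat N /\ N `<=` P /\
  forall p, N p -> exists z, slater_point p z.

Lemma slater_ball : exists2 rho, 0 < rho &
  forall p, `|p - phat| < rho -> P p /\ exists z, slater_point p z.
Proof.
have [N [/nbhs_normP [e /= e0 sub] [NP Ns]]] := slater.
exists e => // p hp; have Np : N p by apply: sub; rewrite /= distrC.
by split; [exact: NP | exact: Ns].
Qed.

Lemma xcvR_local : exists r L, [/\ 0 < r,
  forall p, `|p - phat| < r -> P p /\ exists z, slater_point p z,
  forall p q, `|p - phat| < r -> `|q - phat| < r ->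
    `|xcvR p - xcvR q| <= L * `|p - q|
  & convex_on [set p | `|p - phat| < r] xcvR].
Proof.
have [rho rho0 hb] := slater_ball; set r := rho / 2.
have r0 : 0 < r by rewrite divr_gt0.
have r2 : 2 * r = rho by rewrite /r; field.
have hb2 p : `|p - phat| < 2 * r -> P p /\ exists z, feasible p z.
  by rewrite r2 => /hb [Pp [z /slater_point_feasible fz]]; split=> //; exists z.
have cvx2 : convex_on [set p | `|p - phat| < 2 * r] xcvR.
  by apply: xcvR_convex => p /hb2 [].
have bnd p : `|p - phat| < 2 * r -> xL 0 i <= xcvR p <= xU 0 i.
  move=> /hb2 [_ [z fz]]; have [_ le1 le2] := feasible_xcvR fz.
  by rewrite le2 /=; apply: le_trans le1 _; case/andP: (feasible_box fz i).
have sub : [set p | `|p - phat| < r] `<=` [set p | `|p - phat| < 2 * r].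
  by move=> p /= hp; apply: lt_trans hp _; lra.
exists r, ((xU 0 i - xL 0 i) / r); split => //.
- by move=> p /sub; rewrite /= r2; exact: hb.
- exact: convex_bounded_lipschitz r0 cvx2 bnd.
- exact: convex_onS sub cvx2.
Qed.

Lemma P_phat : P phat.
Proof. by have [rho rho0 hb] := slater_ball; case: (hb phat); rewrite ?subrr ?normr0. Qed.

Section DirectionalDerivative.
Variable xihat : 'rV[R]_nx.
Hypothesis xihat_feasible : feasible phat xihat.
Hypothesis xihat_min : forall z, feasible phat z -> xihat 0 i <= z 0 i.
Variable d : 'rV[R]_np.

Definition linearized_feasible w :=
  (forall j, gcon j xihat phat = 0 ->
     dotv (gradx (gcon j) xihat phat) w <= - dotv (grady (gcon j) xihat phat) d) /\
  (forall j, dotv (gradx (h j) xihat phat) w = - dotv (grady (h j) xihat phat) d).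

Lemma xcvR_phat : xcvR phat = xihat 0 i.
Proof.
apply/eqP; rewrite eq_le; apply/andP; split; first by case: (feasible_xcvR xihat_feasible).
by apply: xcvR_glb => //; exists xihat.
Qed.

Lemma linearized_quotient t z : 0 < t -> P (phat + t *: d) ->
  feasible (phat + t *: d) z -> linearized_feasible (t^-1 *: (z - xihat)).
Proof.
move=> t0 Pt fz; have bz := feasible_box fz; have bxi := feasible_box xihat_feasible.
have shift : phat + t *: d - phat = t *: d by rewrite addrAC subrr add0r.
split=> j.
  move=> act; have := gcon_grad_ineq j bxi P_phat bz Pt.
  rewrite act shift add0r !dotvZr; have := fz.2 j.
  by move=> g_le0 g_ineq; rewrite -(ler_pM2l t0) mulrA mulfV ?gt_eqF // mul1r; lra.
have := affine2_expand_at xihat phat z (phat + t *: d) (h_affine j).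
rewrite (xihat_feasible.1 j) (fz.1 j) shift add0r !dotvZr => e.
by apply: (canLR (mulKf (lt0r_neq0 t0))); lra.
Qed.

Lemma xcvR_ray_lb (m t : R) :
  (forall w, linearized_feasible w -> m <= w 0 i) -> 0 < t ->
  P (phat + t *: d) -> (exists z, feasible (phat + t *: d) z) ->
  xihat 0 i + t * m <= xcvR (phat + t *: d).
Proof.
move=> mlb t0 Pt ne; apply: xcvR_glb => // z fz.
have := mlb _ (linearized_quotient t0 Pt fz); rewrite !mxE -(ler_pM2l t0).
by rewrite mulrA mulfV ?gt_eqF // mul1r; lra.
Qed.

(* Perturbing [w] towards a Slater point makes every active constraint
   strictly decreasing along the ray, so the ray stays feasible. *)
Lemma xcvR_ray_ub w eta : linearized_feasible w -> 0 < eta ->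
  \forall t \near 0^'+, xcvR (phat + t *: d) <= xihat 0 i + t * (w 0 i + eta).
Proof.
move=> [lw_g lw_h] eta0.
have [rho rho0 hb] := slater_ball.
have [_ [xs [xs_h xs_g]]] : P phat /\ exists z, slater_point phat z.
  by apply: hb; rewrite subrr normr0.
have bxs := feasible_box (slater_point_feasible (conj xs_h xs_g)).
have bxi := feasible_box xihat_feasible.
set eps := eta / (`|xs 0 i - xihat 0 i| + 1).
have eps0 : 0 < eps by rewrite divr_gt0 // ltr_wpDl.
set u := w + eps *: (xs - xihat).
have h_ray t j : h j (xihat + t *: u) (phat + t *: d) = 0.
  have xs_dir : dotv (gradx (h j) xihat phat) (xs - xihat) = 0.
    have := affine2_expand_at xihat phat xs phat (h_affine j).
    by rewrite subrr dotv0r addr0 (xihat_feasible.1 j) xs_h add0r.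
  rewrite affine2_expand // (xihat_feasible.1 j) !dotvZr /u dotvDr dotvZr xs_dir lw_h.
  ring.
have g_ray : \forall t \near 0^'+, forall j, gcon j (xihat + t *: u) (phat + t *: d) <= 0.
  apply: filter_forall => j.
  apply: (eventually_le0 (phi := fun t => gcon j (xihat + t *: u) (phat + t *: d))
    (@gcon_grad_expansion j xihat phat u d)).
    exact: xihat_feasible.2.
  move=> act; rewrite /u dotvDr dotvZr.
  have : dotv (gradx (gcon j) xihat phat) (xs - xihat) < 0.
    have := gcon_grad_ineq j bxi P_phat bxs P_phat.
    by rewrite act subrr dotv0r addr0 add0r => /le_lt_trans; apply.
  have := lw_g j act; have := eps0; nra.
near=> t.
have t0 : 0 < t by near: t; exact: nbhs_right_gt.
have ft : feasible (phat + t *: d) (xihat + t *: u).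
  by split; [exact: h_ray | near: t; exact: g_ray].
have [_ le _] := feasible_xcvR ft; apply: le_trans le _.
rewrite /u !mxE lerD2l ler_pM2l // lerD2l.
apply: le_trans (_ : eps * `|xs 0 i - xihat 0 i| <= eta).
  by apply: ler_wpM2l; [exact: ltW | exact: ler_norm].
rewrite /eps mulrAC ler_pdivrMr ?ltr_wpDl // ler_pM2l //; lra.
Unshelve. all: by end_near.
Qed.

(* A linearized-feasible [w] with [w 0 i < - L * `|d|] would make [xcvR]
   drop along the ray faster than its Lipschitz constant [L] allows. *)
Lemma linearized_lbound : exists M, forall w, linearized_feasible w -> M <= w 0 i.
Proof.
have [r [L [r0 _ lip _]]] := xcvR_local.
set tau := r / (`|d| + 1); have tau0 : 0 < tau by rewrite divr_gt0 // ltr_wpDl.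
exists (- (L * `|d|)) => w lw; rewrite leNgt; apply/negP => lt.
set eta := (- (L * `|d|) - w 0 i) / 2.
have eta0 : 0 < eta by rewrite divr_gt0 // subr_gt0.
suff : \forall t \near (0 : R)^'+, False by move/filter_ex => [].
have U := xcvR_ray_ub lw eta0; near=> t.
have t0 : 0 < t by near: t; exact: nbhs_right_gt.
have tt : t < tau by near: t; exact: nbhs_right_lt.
have Ut : xcvR (phat + t *: d) <= xihat 0 i + t * (w 0 i + eta) by near: t.
have := lip _ _ (ray_in_ball phat r0 (lexx 0) tau0) (ray_in_ball phat r0 (ltW t0) tt).
rewrite scale0r addr0 xcvR_phat opprD addrA subrr add0r normrN normrZ (ger0_norm (ltW t0)).
rewrite ler_norml => /andP [_ lipt].
have : 0 <= t * (w 0 i + eta + L * `|d|) by lra.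
by rewrite pmulr_rge0 // /eta; lra.
Unshelve. all: by end_near.
Qed.

(* Inactive constraints are encoded by the trivial inequality [0 . w <= 0]. *)
Definition lin_row (x : gidx + 'I_nh) : 'rV[R]_nx :=
  match x with
  | inl j => if gcon j xihat phat == 0 then gradx (gcon j) xihat phat else 0
  | inr j => gradx (h j) xihat phat
  end.

Definition lin_rhs (x : gidx + 'I_nh) : R :=
  match x with
  | inl j => if gcon j xihat phat == 0 then - dotv (grady (gcon j) xihat phat) d else 0
  | inr j => - dotv (grady (h j) xihat phat) d
  end.

Definition lin_eq : {set gidx + 'I_nh} := [set x | if x is inr _ then true else false].

Lemma polyface_linearizedE w :
  polyface lin_row lin_rhs lin_eq w <-> linearized_feasible w.
Proof.
split.
  move=> [le eq]; split.
    by move=> j act; have := le (inl j); rewrite /= act eqxx.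
  by move=> j; apply: (eq (inr j)); rewrite inE.
move=> [lw_g lw_h]; split.
  case=> j /=; last by rewrite lw_h.
  by case: eqP => [act|_]; [exact: lw_g | rewrite dotv0l].
by case=> j //=; rewrite inE.
Qed.

Lemma linearized_min : exists2 w, linearized_feasible w &
  forall w', linearized_feasible w' -> w 0 i <= w' 0 i.
Proof.
have [r [L [r0 hb _ _]]] := xcvR_local.
set tau := r / (`|d| + 1); have tau0 : 0 < tau by rewrite divr_gt0 // ltr_wpDl.
have t0 : 0 < tau / 2 by rewrite divr_gt0.
have tt : tau / 2 < tau by lra.
have [Pt [z /slater_point_feasible fz]] := hb _ (ray_in_ball phat r0 (ltW t0) tt).
have ne : polyface lin_row lin_rhs lin_eq !=set0.
  by exists ((tau / 2)^-1 *: (z - xihat)); apply/polyface_linearizedE/linearized_quotient.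
have [M hM] := linearized_lbound.
have bnd w : polyface lin_row lin_rhs lin_eq w -> M <= dotv (delta_mx 0 i) w.
  by move=> /polyface_linearizedE /hM; rewrite dotv_delta.
have [w /polyface_linearizedE lw wmin] := polyface_attain ne bnd.
by exists w => // w' /polyface_linearizedE /wmin; rewrite !dotv_delta.
Qed.

Lemma xcvR_has_dirderiv w : linearized_feasible w ->
  (forall w', linearized_feasible w' -> w 0 i <= w' 0 i) ->
  has_dirderiv xcvR phat d (w 0 i).
Proof.
move=> lw wmin; have [r [L [r0 hb _ _]]] := xcvR_local.
set tau := r / (`|d| + 1); have tau0 : 0 < tau by rewrite divr_gt0 // ltr_wpDl.
apply/cvgrPdist_lt => e e0; have e20 : 0 < e / 2 by rewrite divr_gt0.
have U := xcvR_ray_ub lw e20; near=> t.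
have t0 : 0 < t by near: t; exact: nbhs_right_gt.
have tt : t < tau by near: t; exact: nbhs_right_lt.
have Ut : xcvR (phat + t *: d) <= xihat 0 i + t * (w 0 i + e / 2) by near: t.
have [Pt [z /slater_point_feasible fz]] := hb _ (ray_in_ball phat r0 (ltW t0) tt).
have Lt := xcvR_ray_lb wmin t0 Pt (ex_intro _ z fz).
have te : 0 < t * e by rewrite mulr_gt0.
rewrite xcvR_phat distrC ger0_norm.
  by rewrite ltrBlDl ltr_pdivrMr //; lra.
by rewrite subr_ge0 ler_pdivlMr //; lra.
Unshelve. all: by end_near.
Qed.

End DirectionalDerivative.

End RelaxedProblem.

Theorem proposition5p1 (R : realType) (nf nh np : nat)
  (f fcv fcc : 'rV[R]_(nf + nh) -> 'rV[R]_np -> 'rV[R]_(nf + nh))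
  (P : set 'rV[R]_np) (xL xU : 'rV[R]_(nf + nh))
  (x : 'rV[R]_np -> 'rV[R]_(nf + nh))
  (kc : 'I_nf -> nat) (fcvp : forall k, 'I_(kc k) -> 'rV[R]_(nf + nh) -> 'rV[R]_np -> R)
  (lc : 'I_nf -> nat) (fccp : forall k, 'I_(lc k) -> 'rV[R]_(nf + nh) -> 'rV[R]_np -> R)
  (phat : 'rV[R]_np) (i : 'I_(nf + nh)) :
  let ftil k z p := f z p 0 (lshift nh k) in
  let h j z p := f z p 0 (rshift nf j) in
  let Q := [set p | P p /\ exists z, f z p = 0] in
  let X := inbox xL xU in
  let isg := gcomp fcvp fccp xL xU in
  let F p := fine (xcv fcv fcc xL xU i p) in
  (* P convex (MathComp-Analysis convex_set) and compact, Q nonempty *)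
  convex_set P -> compact P -> Q !=set0 ->
  (* implicit function x : Q -> X *)
  (forall p, Q p -> f (x p) p = 0 /\ X (x p)) ->
  (* fcv, fcc are convex / concave relaxations of f on X x P *)
  (forall z p m, X z -> P p -> fcv z p 0 m <= f z p 0 m <= fcc z p 0 m) ->
  (forall m, convex_on2 xL xU P (fun z p => fcv z p 0 m)) ->
  (forall m, concave_on2 xL xU P (fun z p => fcc z p 0 m)) ->
  (* h affine, each ftilde_k not affine *)
  (forall j, affine2 (h j)) ->
  (forall k, ~ affine2 (ftil k)) ->
  (* the relaxations of the affine part h are h itself *)
  (forall z p j, fcv z p 0 (rshift nf j) = h j z p /\ fcc z p 0 (rshift nf j) = h j z p) ->
  (* piecewise differentiable relaxations of ftilde_k *)
  (forall k z p, (forall j, fcvp k j z p <= fcv z p 0 (lshift nh k)) /\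
                 exists j, fcvp k j z p = fcv z p 0 (lshift nh k)) ->
  (forall k z p, (forall j, fcc z p 0 (lshift nh k) <= fccp k j z p) /\
                 exists j, fccp k j z p = fcc z p 0 (lshift nh k)) ->
  (forall k j, C1 (fcvp k j) /\ convex_on2 xL xU P (fcvp k j)) ->
  (forall k j, C1 (fccp k j) /\ concave_on2 xL xU P (fccp k j)) ->
  (* phat in int(Q) *)
  (interior Q) phat ->
  (* linear independence of the gradients of h_j w.r.t. xi *)
  (forall z p, row_free (\matrix_(j < nh, m < nf + nh) gradx (h j) z p 0 m)) ->
  (* strong Slater condition *)
  (exists N, nbhs phat N /\ N `<=` Q /\
     forall p, N p -> exists xi, X xi /\ (forall j, h j xi p = 0) /\
                                 forall c, isg c -> c xi p < 0) ->
  (* conclusions *)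
  (* locally Lipschitz near phat *)
  (exists r : R, 0 < r /\ exists L : R,
     forall p q, `|p - phat| < r -> `|q - phat| < r ->
       xcv fcv fcc xL xU i p \is a fin_num /\ `|F p - F q| <= L * `|p - q|) /\
  (* directionally differentiable at phat *)
  (forall d, exists l, has_dirderiv F phat d l) /\
  (* formula for the directional derivative *)
  (forall xihat,
     ((forall j, h j xihat phat = 0) /\ (forall c, isg c -> c xihat phat <= 0) /\
      forall xi, (forall j, h j xi phat = 0) -> (forall c, isg c -> c xi phat <= 0) ->
        xihat 0 i <= xi 0 i) ->
     forall d,
       let lpfeas w :=
         (forall c, isg c -> c xihat phat = 0 ->
             dotv (gradx c xihat phat) w <= - dotv (grady c xihat phat) d) /\
         (forall j, dotv (gradx (h j) xihat phat) w = - dotv (grady (h j) xihat phat) d) in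
       exists w, lpfeas w /\ (forall w', lpfeas w' -> w 0 i <= w' 0 i) /\
                 has_dirderiv F phat d (w 0 i)).
Proof.
move=> ftil h Q X isg F _ _ _ _ _ _ _ h_aff _ relax_h fcv_max fcc_min fcvp_C1 fccp_C1
  _ _ [N [NN [NQ Ns]]].
have slater : exists N, nbhs phat N /\ N `<=` P /\
    forall p, N p -> exists z, slater_point xL xU fcvp fccp h p z.
  exists N; split=> //; split=> [p /NQ [] //|p /Ns [z [_ [hz /gcomp_allP gz]]]].
  by exists z.
have [r [L [r0 hb lip cvx]]] :=
  xcvR_local i relax_h fcv_max fcc_min fcvp_C1 fccp_C1 h_aff slater.
split.
  exists r; split=> //; exists L => p q hp hq; split; last exact: lip.
  have [_ [z /slater_point_feasible fz]] := hb p hp.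
  by have [-> _ _] := feasible_xcvR i relax_h fcv_max fcc_min fz.
split; first exact: convex_lipschitz_dirderiv r0 cvx lip.
move=> xihat [xihat_h [/gcomp_allP xihat_g xihat_min]] d lpfeas.
have ximin z : feasible xL xU fcvp fccp h phat z -> xihat 0 i <= z 0 i.
  by move=> [hz gz]; apply: xihat_min => //; apply/gcomp_allP.
have lpfeasE w : lpfeas w <-> linearized_feasible xL xU fcvp fccp h phat xihat d w.
  split=> -[g_le h_eq]; split=> //; last by apply/gcomp_allP.
  by move=> j; apply: g_le; apply/gcompP; exists j.
have [w lw wmin] := linearized_min relax_h fcv_max fcc_min fcvp_C1 fccp_C1 h_aff
  slater (conj xihat_h xihat_g) ximin d.
exists w; split; first exact/lpfeasE.
split; first by move=> w' /lpfeasE /wmin.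
exact (xcvR_has_dirderiv relax_h fcv_max fcc_min fcvp_C1 fccp_C1 h_aff slater
  (conj xihat_h xihat_g) ximin lw wmin).
Qed.
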